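(* Let $J_{nonlsd}\subset MPR$ be the subgroup spanned by all permutation words that are not lsd. Then $J_{nonlsd}$ is a two-sided ideal of the algebra $(MPR,m')$.
   Context: A permutation word of length $n$ is a word $[s_1,\dots,s_n]$ over $\mathbf N$ in which each of $1,\dots,n$ occurs exactly once; $S_n$ denotes the set of these; the empty word is the permutation word of length $0$. Its descent set is $\mathrm{desc}(\sigma)=\{i\in\{1,\dots,n-1\}:s_i>s_{i+1}\}$. A permutation $\sigma\in S_n$ is lsd if it is the lexicographically smallest element of $\{\tau\in S_n:\mathrm{desc}(\tau)=\mathrm{desc}(\sigma)\}$. $*$ is concatenation, $\mathrm{supp}$ the set of letters of a word, and for a word $\alpha$ over $\mathbf N$ without repeated letters $\mathrm{st}(\alpha)$ replaces its letters by $1,\dots,\mathrm{length}(\alpha)$ via the order-preserving bijection. $(MPR,m')$ is the free abelian group on all permutation words with product defined for $\sigma\in S_m$, $\tau\in S_n$ by $m'(\sigma\otimes\tau)=\sum u*v$ over all pairs of words $u,v$ over $\mathbf N$ with $\mathrm{supp}(u)\cup\mathrm{supp}(v)=\{1,\dots,m+n\}$ (disjointly), $\mathrm{st}(u)=\sigma$, $\mathrm{st}(v)=\tau$. *)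

From mathcomp Require Import all_boot all_order all_algebra.
Set Implicit Arguments. Unset Strict Implicit. Unset Printing Implicit Defensive.
Import GRing.Theory.
Local Open Scope ring_scope.

Definition is_perm_word (w : seq nat) : bool := perm_eq w (iota 1 (size w)).

(* descent set {i in 1..n-1 : s_i > s_(i+1)} (1-indexed positions) *)
Definition desc (w : seq nat) : seq nat :=
  [seq i <- iota 1 (size w).-1 | (nth 0 w i < nth 0 w i.-1)%N].

Fixpoint lexle (s t : seq nat) : bool :=
  match s, t with
  | [::], _ => true
  | _ :: _, [::] => false
  | x :: s', y :: t' => (x < y)%N || ((x == y) && lexle s' t')
  end.

Definition lsd (s : seq nat) : Prop :=
  is_perm_word s /\
  forall t : seq nat, is_perm_word t -> size t = size s -> desc t = desc s ->
    lexle s t.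

Definition st (a : seq nat) : seq nat :=
  [seq (count (fun y => (y < x)%N) a).+1 | x <- a].

(* Elements of MPR are modelled as int-valued functions on words:
   f = sum_p p.1 * [p.2] for a finite list of (coefficient, perm word) pairs. *)
Definition lin_comb (s : seq (int * seq nat)) : seq nat -> int :=
  fun w => \sum_(p <- s) p.1 * (p.2 == w)%:R.

Definition in_MPR (f : seq nat -> int) : Prop :=
  exists s : seq (int * seq nat),
    all (fun p => is_perm_word p.2) s /\ forall w, f w = lin_comb s w.

Definition in_Jnonlsd (f : seq nat -> int) : Prop :=
  exists s : seq (int * seq nat),
    (forall p, p \in s -> is_perm_word p.2 /\ ~ lsd p.2) /\
    forall w, f w = lin_comb s w.

(* m' on basis elements: coefficient of the word w in m'(sigma (x) tau),
   i.e. the number of pairs (u,v) with u*v = w, supp u, supp v a disjoint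
   decomposition of {1..m+n}, st u = sigma, st v = tau. *)
Definition mbasis (sigma tau : seq nat) (w : seq nat) : int :=
  \sum_(k < (size w).+1)
     ((is_perm_word w && (size w == size sigma + size tau)%N
       && (st (take k w) == sigma) && (st (drop k w) == tau)) : bool)%:R.

(* bilinear extension of m': (f g)(w) = sum over the ways of writing
   w = u*v (i.e. u = take k w, v = drop k w) of f(st u) g(st v),
   w a permutation word (so supp u, supp v partition {1..|w|}). *)
Definition mprod (f g : seq nat -> int) : seq nat -> int :=
  fun w => \sum_(k < (size w).+1)
    (is_perm_word w)%:R * (f (st (take k w)) * g (st (drop k w))).

(* A permutation word is lsd exactly when each of its descents drops by one,
   i.e. s_i > s_(i+1) forces s_i = s_(i+1) + 1.  If z + 1 occurs before z
   without being adjacent to it, exchanging the two values keeps the descent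
   set and lowers the word; conversely, with unit descents every descending
   run starting at the first difference with a competitor already uses the
   smallest values available.  Unit descents survive passing to a prefix or
   suffix and standardizing, so in m'(sigma (x) tau) every word u * v with a
   non-lsd factor st u = sigma or st v = tau is itself non-lsd. *)

From mathcomp Require Import all_boot all_order all_algebra zify.
Import GRing.Theory.
Set Implicit Arguments. Unset Strict Implicit. Unset Printing Implicit Defensive.

Open Scope nat_scope.

Lemma lexle_nth s t : size s = size t ->
  (forall p, p < size s -> (forall i, i < p -> nth 0 s i = nth 0 t i) ->
     nth 0 s p <= nth 0 t p) ->
  lexle s t.
Proof.
elim: s t => [|x s IHs] [|y t] //= [eq_st] le_first.
have /= := le_first 0 erefl (fun i (i_lt0 : i < 0) => False_ind _ (notF i_lt0)).
case: ltngtP => //= eq_xy _; subst y; apply: IHs => // p p_lt eq_prefix.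
by apply: (le_first p.+1) => // -[|i] //= /eq_prefix.
Qed.

Lemma lexleN_nth s t p : p < size s -> p < size t ->
  (forall i, i < p -> nth 0 s i = nth 0 t i) -> nth 0 t p < nth 0 s p ->
  ~~ lexle s t.
Proof.
elim: s t p => [|x s IHs] [|y t] [|p] //=.
  by move=> _ _ _ lt_yx; rewrite ltnNge (ltnW lt_yx) gtn_eqF.
move=> p_lt_s p_lt_t eq_prefix lt_p.
have /= <- := eq_prefix 0 erefl; rewrite ltnn eqxx /=.
by apply: (IHs t p) => // i /(eq_prefix i.+1).
Qed.

Lemma perm_word_mem w x : is_perm_word w -> (x \in w) = (0 < x <= size w).
Proof. by move/perm_mem->; rewrite mem_iota add1n ltnS. Qed.

Lemma perm_word_uniq w : is_perm_word w -> uniq w.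
Proof. by move/perm_uniq->; apply: iota_uniq. Qed.

Lemma eq_desc_nth w t i : size t = size w -> desc t = desc w -> i.+1 < size w ->
  (nth 0 t i.+1 < nth 0 t i) = (nth 0 w i.+1 < nth 0 w i).
Proof.
move=> eq_size eq_desc i_lt; have := congr1 (fun d => i.+1 \in d) eq_desc.
rewrite /desc /= !mem_filter !mem_iota eq_size.
have -> : (1 <= i.+1 < 1 + (size w).-1) = true by lia.
by rewrite !andbT.
Qed.

Definition unit_descents (w : seq nat) := forall i, i.+1 < size w ->
  nth 0 w i.+1 < nth 0 w i -> nth 0 w i = (nth 0 w i.+1).+1.

Section DescendingRuns.

Variable w : seq nat.

Lemma descending_run_end p : p < size w -> exists2 r, p <= r < size w &
  (forall j, p <= j < r -> nth 0 w j.+1 < nth 0 w j) /\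
  (r.+1 < size w -> nth 0 w r <= nth 0 w r.+1).
Proof.
move=> p_lt; have [d] : exists d, size w = p + d.+1 by exists (size w - p.+1); lia.
elim: d p p_lt => [|d IHd] p p_lt size_w.
  by exists p; [lia | split=> [j|]; lia].
case: (ltnP (nth 0 w p.+1) (nth 0 w p)) => [desc_p|asc_p]; last first.
  by exists p; [lia | split=> [j|]; lia].
have [r r_range [run_r end_r]] := IHd p.+1 ltac:(lia) ltac:(lia).
exists r; first lia; split=> // j j_range.
by case: (j =P p) => [->//|ne_jp]; apply: run_r; lia.
Qed.

Variables p r : nat.
Hypothesis r_lt : r < size w.
Hypothesis run : forall j, p <= j < r -> nth 0 w j.+1 < nth 0 w j.

Lemma descending_run_ge k : k <= r - p -> nth 0 w r + k <= nth 0 w (r - k).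
Proof.
elim: k => [|k IHk] k_le; first by rewrite subn0 addn0.
have E : r - k = (r - k.+1).+1 by lia.
by have := run (j := r - k.+1) ltac:(lia); have := IHk ltac:(lia); rewrite -E; lia.
Qed.

Hypothesis unit_w : unit_descents w.

Lemma unit_descending_run k : k <= r - p -> nth 0 w (r - k) = nth 0 w r + k.
Proof.
elim: k => [|k IHk] k_le; first by rewrite subn0 addn0.
have E : r - k = (r - k.+1).+1 by lia.
have desc_k : nth 0 w (r - k) < nth 0 w (r - k.+1) by rewrite E; apply: run; lia.
have := @unit_w (r - k.+1) ltac:(lia); rewrite -E => /(_ desc_k) ->.
by rewrite IHk ?addnS //; lia.
Qed.

Hypothesis uniq_w : uniq w.
Hypothesis end_r : r.+1 < size w -> nth 0 w r <= nth 0 w r.+1.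

(* The run p..r descends to [nth 0 w r] by unit steps, and after r a unit
   descent can never come back down to that value. *)
Lemma unit_descending_run_min q : p <= q < size w -> nth 0 w r <= nth 0 w q.
Proof.
case/andP=> le_pq q_lt; case: (leqP q r) => [le_qr | lt_rq].
  by have := unit_descending_run (k := r - q) ltac:(lia); rewrite subKn //; lia.
have after_r d : r + d.+1 < size w -> nth 0 w r < nth 0 w (r + d.+1).
  elim: d => [|d IHd] d_lt.
    have := end_r ltac:(lia); rewrite addn1 leq_eqVlt => /orP[/eqP eq_r|//].
    by have := nth_uniq 0 r_lt d_lt uniq_w; rewrite addn1 eq_r eqxx; lia.
  have lt_d := IHd ltac:(lia); rewrite ltnNge; apply/negP => ge_d.
  have := @unit_w (r + d.+1) ltac:(lia); rewrite -addnS => /(_ ltac:(lia)) eq_d.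
  have := nth_uniq 0 d_lt r_lt uniq_w.
  by rewrite (_ : nth 0 w (r + d.+2) = nth 0 w r) ?eqxx => [/esym/eqP|]; lia.
by have := after_r (q - r.+1) ltac:(lia); rewrite (_ : r + _ = q) //; lia.
Qed.

End DescendingRuns.

Lemma unit_descents_lsd w : is_perm_word w -> unit_descents w -> lsd w.
Proof.
move=> perm_w unit_w; split=> // t perm_t size_t desc_t.
apply: lexle_nth => // p p_lt eq_prefix.
(* t descends along the run p..r of w as well, so t_p >= t_r + (r - p), while
   w_p = w_r + (r - p) and t_r is a value of w found at or after p. *)
have [r r_range [run_w end_r]] := descending_run_end p_lt.
have r_lt : r < size w by case/andP: r_range.
have r_lt_t : r < size t by rewrite size_t.
have run_t j : p <= j < r -> nth 0 t j.+1 < nth 0 t j.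
  by move=> j_range; rewrite (eq_desc_nth size_t desc_t) ?run_w //; lia.
have := unit_descending_run r_lt run_w unit_w (leqnn (r - p)).
have := descending_run_ge r_lt_t run_t (leqnn (r - p)).
rewrite subKn; last by case/andP: r_range.
suff : nth 0 w r <= nth 0 t r by lia.
have tr_in_w : nth 0 t r \in w.
  by rewrite (perm_word_mem _ perm_w) -size_t -(perm_word_mem _ perm_t) mem_nth // size_t.
rewrite -(nth_index 0 tr_in_w).
apply: (unit_descending_run_min r_lt run_w unit_w (perm_word_uniq perm_w) end_r).
rewrite index_mem tr_in_w andbT leqNgt; apply/negP => q_lt_p.
have := eq_prefix _ q_lt_p; rewrite nth_index // => eq_tq.
have q_lt_t : index (nth 0 t r) w < size t by rewrite size_t index_mem.
have := nth_uniq 0 r_lt_t q_lt_t (perm_word_uniq perm_t).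
by rewrite -eq_tq eqxx => /esym/eqP; lia.
Qed.

Definition swap_succ (z v : nat) :=
  if v == z then z.+1 else if v == z.+1 then z else v.

Lemma swap_succK z : involutive (swap_succ z).
Proof. by move=> v; rewrite /swap_succ; do ! case: eqP; lia. Qed.

Lemma swap_succ_ltE z x y :
  ~~ ((x == z) && (y == z.+1)) -> ~~ ((x == z.+1) && (y == z)) ->
  (swap_succ z x < swap_succ z y) = (x < y).
Proof. by rewrite /swap_succ; do ! case: eqP; lia. Qed.

(* Exchanging the values z.+1 and z keeps the descent set when they are not
   adjacent, and makes the word lexicographically smaller. *)
Lemma lsdN_distant_succ_inversion w a b z :
  is_perm_word w -> a.+1 < b -> b < size w ->
  nth 0 w a = z.+1 -> nth 0 w b = z -> ~ lsd w.
Proof.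
move=> perm_w lt_ab b_lt w_a w_b [_ lsd_w].
have uniq_w := perm_word_uniq perm_w.
have a_lt : a < size w by lia.
have at_z i : i < size w -> (nth 0 w i == z) = (i == b).
  by move=> i_lt; rewrite -w_b nth_uniq.
have at_z1 i : i < size w -> (nth 0 w i == z.+1) = (i == a).
  by move=> i_lt; rewrite -w_a nth_uniq.
set t := map (swap_succ z) w.
have size_t : size t = size w by rewrite size_map.
have perm_t : is_perm_word t.
  rewrite /is_perm_word size_t; apply: perm_trans perm_w.
  apply: uniq_perm => //; first by rewrite map_inj_uniq //; apply: can_inj (swap_succK z).
  move=> x; rewrite -{1}(swap_succK z x) mem_map; last by apply: can_inj (swap_succK z).
  have z_in : z \in w by rewrite -w_b mem_nth.
  have z1_in : z.+1 \in w by rewrite -w_a mem_nth.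
  by rewrite /swap_succ; do ! case: eqP => [->|_] //; rewrite ?z_in ?z1_in.
have desc_t : desc t = desc w.
  rewrite /desc size_t; apply: eq_in_filter => i; rewrite mem_iota => i_range.
  rewrite !(nth_map 0) ?swap_succ_ltE ?at_z ?at_z1 //; lia.
apply/negP: (lsd_w t perm_t size_t desc_t).
apply: (lexleN_nth a_lt); rewrite ?size_t // ?(nth_map 0) // ?w_a.
  move=> i lt_ia; rewrite (nth_map 0); last lia.
  by rewrite /swap_succ at_z ?at_z1; try lia; rewrite !ifF //; apply/eqP; lia.
by rewrite /swap_succ eqxx gtn_eqF.
Qed.

Lemma lsd_unit_descents w : lsd w -> unit_descents w.
Proof.
move=> lsd_w; have perm_w := lsd_w.1; have uniq_w := perm_word_uniq perm_w.
have adjacent a b z : a < b -> b < size w ->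
    nth 0 w a = z.+1 -> nth 0 w b = z -> b = a.+1.
  move=> lt_ab b_lt w_a w_b; case: (ltnP a.+1 b) => [lt_ab1|]; last lia.
  by case: (lsdN_distant_succ_inversion perm_w lt_ab1 b_lt w_a w_b lsd_w).
move=> i i_lt; set u := nth 0 w i; set v := nth 0 w i.+1 => lt_vu.
apply/eqP; apply: contraT => /eqP ne_uv.
have in_w x : v <= x <= u -> x \in w.
  have := mem_nth 0 i_lt; have := mem_nth 0 (ltnW i_lt).
  by rewrite -/u -/v !(perm_word_mem _ perm_w); lia.
have index_u : index u w = i by rewrite index_uniq // ltnW.
(* the values v, v + 1, ..., u all lie right of position i, yet u sits at i *)
have right_of_i j : j <= u - v -> i < index (v + j) w.
  elim: j => [|j IHj] j_le; first by rewrite addn0 index_uniq.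
  have y_in : v + j \in w by apply: in_w; lia.
  have x_in : v + j.+1 \in w by apply: in_w; lia.
  have := nth_index 0 y_in; have := nth_index 0 x_in.
  have := index_mem (v + j) w; have := index_mem (v + j.+1) w; rewrite x_in y_in.
  have := IHj ltac:(lia).
  case: (ltngtP (index (v + j.+1) w) (index (v + j) w)) => [lt_xy||->]; try lia.
  move=> i_lt_y _ y_lt w_x w_y.
  have eq_y := adjacent _ _ _ lt_xy y_lt (etrans w_x (addnS v j)) w_y.
  case: (index (v + j.+1) w =P i) => [x_at_i|]; last lia.
  by move: w_x w_y; rewrite eq_y x_at_i -/u -/v; lia.
have := right_of_i (u - v) (leqnn _); rewrite subnKC ?index_u; lia.
Qed.

Lemma count_ltnS (a : seq nat) x :
  count (fun y => y < x.+1) a = count (fun y => y < x) a + count_mem x a.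
Proof.
elim: a => [|y a IHa] //=; rewrite IHa ltnS leq_eqVlt.
by case: (y =P x) => [->|_]; rewrite /= ?ltnn; lia.
Qed.

Lemma count_ltn_mono (a : seq nat) x y : x <= y ->
  count (fun z => z < x) a <= count (fun z => z < y) a.
Proof. by move=> le_xy; apply: sub_count => z /leq_trans; apply. Qed.

Lemma count_ltn_strict (a : seq nat) x y : x < y -> x \in a ->
  count (fun z => z < x) a < count (fun z => z < y) a.
Proof.
move=> lt_xy x_in; apply: leq_trans (count_ltn_mono a lt_xy).
by rewrite count_ltnS -addn1 leq_add2l -has_count; apply/hasP; exists x => /=.
Qed.

Lemma st_perm_word (a : seq nat) : uniq a -> is_perm_word (st a).
Proof.
move=> uniq_a.
have uniq_st : uniq (st a).
  rewrite map_inj_in_uniq // => x y x_in y_in [eq_xy].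
  by case: (ltngtP x y) => // [/count_ltn_strict|/count_ltn_strict];
    [move/(_ _ x_in) | move/(_ _ y_in)]; rewrite eq_xy ltnn.
apply: uniq_perm; rewrite ?iota_uniq //.
have st_sub : {subset st a <= iota 1 (size (st a))}.
  move=> z /mapP [x x_in ->]; rewrite mem_iota size_map.
  have := count_ltn_strict (ltnSn x) x_in; have := count_size (fun y => y < x.+1) a.
  lia.
by have [] := uniq_min_size uniq_st st_sub; rewrite ?size_iota.
Qed.

Lemma st_unit_descents (a : seq nat) :
  uniq a -> unit_descents a -> unit_descents (st a).
Proof.
move=> uniq_a unit_a i; rewrite size_map => i_lt.
rewrite !(nth_map 0) ?(ltnW i_lt) // => lt_st.
have lt_a : nth 0 a i.+1 < nth 0 a i.
  by rewrite ltnNge; apply: contraL lt_st => /(count_ltn_mono a); rewrite -ltnS ltnNge.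
rewrite (unit_a i i_lt lt_a) count_ltnS count_uniq_mem ?mem_nth //; lia.
Qed.

Lemma unit_descents_take w k : unit_descents w -> unit_descents (take k w).
Proof.
move=> unit_w i; rewrite size_take_min => i_lt.
by rewrite !nth_take; [apply: unit_w | lia | lia]; lia.
Qed.

Lemma unit_descents_drop w k : unit_descents w -> unit_descents (drop k w).
Proof.
move=> unit_w i; rewrite size_drop => i_lt.
by rewrite !nth_drop !addnS; apply: unit_w; lia.
Qed.

Lemma lsd_st_take_drop w k :
  lsd w -> lsd (st (take k w)) /\ lsd (st (drop k w)).
Proof.
move=> lsd_w; have uniq_w := perm_word_uniq lsd_w.1.
have unit_w := lsd_unit_descents lsd_w.
by split; apply: unit_descents_lsd; [apply: st_perm_word; apply: take_uniq |
  apply: st_unit_descents; [apply: take_uniq | apply: unit_descents_take] |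
  apply: st_perm_word; apply: drop_uniq |
  apply: st_unit_descents; [apply: drop_uniq | apply: unit_descents_drop]].
Qed.

Close Scope nat_scope.
Local Open Scope ring_scope.

Definition bounded_support (f : seq nat -> int) :=
  exists N, forall w, f w != 0 -> (size w <= N)%N.

Lemma lin_comb_neq0 s w : lin_comb s w != 0 -> w \in [seq p.2 | p <- s].
Proof.
apply: contraR => w_notin; rewrite /lin_comb big_seq big1 // => p p_in.
by rewrite (_ : p.2 == w = false) ?mulr0 //; apply: contraNF w_notin => /eqP <-; apply: map_f.
Qed.

Lemma in_MPR_bounded_support f : in_MPR f -> bounded_support f.
Proof.
move=> [s [_ eq_f]]; exists (\max_(p <- s) size p.2)%N => w.
by rewrite eq_f => /lin_comb_neq0 /mapP [p p_in ->]; apply: leq_bigmax_seq.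
Qed.

Lemma in_Jnonlsd_MPR f : in_Jnonlsd f -> in_MPR f.
Proof. by move=> [s [perm_s eq_f]]; exists s; split=> //; apply/allP => p /perm_s []. Qed.

Lemma in_Jnonlsd_support g w : in_Jnonlsd g -> g w != 0 -> is_perm_word w /\ ~ lsd w.
Proof. by move=> [s [nonlsd_s ->]] /lin_comb_neq0 /mapP [p /nonlsd_s ? ->]. Qed.

Lemma lin_comb_graph (f : seq nat -> int) S : uniq S ->
  (forall w, f w != 0 -> w \in S) -> forall w, f w = lin_comb [seq (f x, x) | x <- S] w.
Proof.
move=> uniq_S supp_f w; rewrite /lin_comb big_map /=.
have [w_in | w_notin] := boolP (w \in S).
  rewrite (bigD1_seq w) //= eqxx mulr1 big1 ?addr0 // => x /negbTE ->.
  by rewrite mulr0.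
rewrite big1_seq => [|x /= x_in]; first by apply/eqP; apply: contraNT w_notin => /supp_f.
by rewrite (_ : x == w = false) ?mulr0 //; apply: contraNF w_notin => /eqP <-.
Qed.

(* Only finitely many permutation words have length at most N. *)
Lemma in_Jnonlsd_bounded (h : seq nat -> int) N :
  (forall w, h w != 0 -> [/\ is_perm_word w, ~ lsd w & (size w <= N)%N]) ->
  in_Jnonlsd h.
Proof.
move=> supp_h.
set S := undup [seq w <- flatten [seq permutations (iota 1 n) | n <- iota 0 N.+1] | h w != 0].
exists [seq (h x, x) | x <- S]; split; last first.
  apply: lin_comb_graph; first exact: undup_uniq.
  move=> w hw_neq0; rewrite mem_undup mem_filter hw_neq0 andTb.
  have [perm_w _ size_w] := supp_h w hw_neq0.
  apply/flattenP; exists (permutations (iota 1 (size w))); last by rewrite mem_permutations.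
  by apply/mapP; exists (size w); rewrite // mem_iota.
move=> p /mapP [x]; rewrite mem_undup mem_filter => /andP[hx_neq0 _] -> /=.
by have [] := supp_h x hx_neq0.
Qed.

Lemma mprod_neq0 f g w : mprod f g w != 0 -> is_perm_word w /\
  exists k, f (st (take k w)) != 0 /\ g (st (drop k w)) != 0.
Proof.
rewrite /mprod; have [perm_w|_] := boolP (is_perm_word w); last first.
  by rewrite big1 ?eqxx // => k _; rewrite mul0r.
move=> sum_neq0; split=> //.
suff /existsP[k /andP[fk gk]] : [exists k : 'I_(size w).+1,
    (f (st (take k w)) != 0) && (g (st (drop k w)) != 0)] by exists k.
apply: contraTT sum_neq0 => /existsPn none; rewrite negbK big1 // => k _.
by have /nandP[] := none k => /negbNE /eqP ->; rewrite ?mul0r ?mulr0.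
Qed.

Lemma in_Jnonlsd0 : in_Jnonlsd (fun _ => 0).
Proof. by exists [::]; split=> // w; rewrite /lin_comb big_nil. Qed.

Lemma in_JnonlsdB f g :
  in_Jnonlsd f -> in_Jnonlsd g -> in_Jnonlsd (fun w => f w - g w).
Proof.
move=> [sf [Jsf eq_f]] [sg [Jsg eq_g]].
exists (sf ++ [seq (- p.1, p.2) | p <- sg]); split.
  by move=> p; rewrite mem_cat => /orP[/Jsf // | /mapP [q /Jsg ? ->]].
move=> w; rewrite eq_f eq_g /lin_comb big_cat big_map /= -sumrN.
by congr (_ + _); apply: eq_bigr => p _; rewrite mulNr.
Qed.

Lemma size_st_take_drop w k :
  size w = (size (st (take k w)) + size (st (drop k w)))%N.
Proof. by rewrite !size_map -size_cat cat_take_drop. Qed.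

Lemma in_Jnonlsd_mprodl f g :
  bounded_support f -> in_Jnonlsd g -> in_Jnonlsd (mprod f g).
Proof.
move=> [Nf supp_f] Jg; have [Ng supp_g] := in_MPR_bounded_support (in_Jnonlsd_MPR Jg).
apply: (@in_Jnonlsd_bounded _ (Nf + Ng)) => w /mprod_neq0 [perm_w [k [fk gk]]].
have [_ nonlsd_v] := in_Jnonlsd_support Jg gk.
split=> //; first by move/(lsd_st_take_drop k) => [].
by rewrite (size_st_take_drop w k) leq_add ?supp_f ?supp_g.
Qed.

Lemma in_Jnonlsd_mprodr f g :
  in_Jnonlsd f -> bounded_support g -> in_Jnonlsd (mprod f g).
Proof.
move=> Jf [Ng supp_g]; have [Nf supp_f] := in_MPR_bounded_support (in_Jnonlsd_MPR Jf).
apply: (@in_Jnonlsd_bounded _ (Nf + Ng)) => w /mprod_neq0 [perm_w [k [fk gk]]].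
have [_ nonlsd_u] := in_Jnonlsd_support Jf fk.
split=> //; first by move/(lsd_st_take_drop k) => [].
by rewrite (size_st_take_drop w k) leq_add ?supp_f ?supp_g.
Qed.

Theorem proposition14p1 :
  (* J_nonlsd is an additive subgroup of MPR *)
  (forall f, in_Jnonlsd f -> in_MPR f) /\
  in_Jnonlsd (fun _ => 0) /\
  (forall f g, in_Jnonlsd f -> in_Jnonlsd g -> in_Jnonlsd (fun w => f w - g w)) /\
  (* and it is closed under left and right multiplication by MPR *)
  (forall f g, in_MPR f -> in_Jnonlsd g ->
     in_Jnonlsd (mprod f g) /\ in_Jnonlsd (mprod g f)).
Proof.
split; first exact: in_Jnonlsd_MPR.
split; first exact: in_Jnonlsd0.
split; first exact: in_JnonlsdB.
move=> f g /in_MPR_bounded_support bounded_f Jg.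
by split; [apply: in_Jnonlsd_mprodl | apply: in_Jnonlsd_mprodr].
Qed.
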